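(* Let $G=(V_1,E_1)$ and $H=(V_2,E_2)$ be digraphs with weak NU polymorphisms $t_1$ and $t_2$ respectively, both of the same arity $n$. Define $w$ on $V_1\dot\cup V_2$ by $w(x_1,\dots,x_n)=t_1(x_1,\dots,x_n)$ if $x_1,\dots,x_n\in V_1$; $w(x_1,\dots,x_n)=t_2(x_1,\dots,x_n)$ if $x_1,\dots,x_n\in V_2$; and otherwise $w(x_1,\dots,x_n)=x_i$ where $i$ is minimal with $x_i\in V_1$. Then $w$ is a weak NU polymorphism of $G\mathbin{\dot\cup}H$ and of $G\mathbin{\overline{\cup}}H$.
   Context: Digraphs are finite and loopless. $G\mathbin{\dot\cup}H$ is the disjoint union digraph on $V_1\dot\cup V_2$ with edges $E_1\cup E_2$; $G\mathbin{\overline{\cup}}H$ is the same structure with two additional unary relations interpreted as $V_1$ and $V_2$. A polymorphism of arity $n$ of a structure is a map from $n$-tuples of elements to elements which, applied coordinatewise to any $n$ tuples of a relation, yields a tuple of that relation. A weak NU polymorphism is an idempotent polymorphism $w$ of arity $n>1$ with $w(y,x,\dots,x)=w(x,y,x,\dots,x)=\dots=w(x,\dots,x,y)$ for all $x,y$. *)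

From mathcomp Require Import all_boot.
Set Implicit Arguments. Unset Strict Implicit. Unset Printing Implicit Defensive.

Section Defs.
Variable V : finType.

Definition dg_polymorphism (E : rel V) (n : nat) (f : {ffun 'I_n -> V} -> V) :=
  forall a b : {ffun 'I_n -> V}, (forall i, E (a i) (b i)) -> E (f a) (f b).

Definition unary_polymorphism (P : pred V) (n : nat) (f : {ffun 'I_n -> V} -> V) :=
  forall a : {ffun 'I_n -> V}, (forall i, P (a i)) -> P (f a).

Definition idempotent_op (n : nat) (f : {ffun 'I_n -> V} -> V) :=
  forall x : V, f [ffun _ => x] = x.

Definition nu_tuple (n : nat) (x y : V) (i : 'I_n) : {ffun 'I_n -> V} :=
  [ffun j => if j == i then y else x].

Definition weak_nu_op (n : nat) (f : {ffun 'I_n -> V} -> V) :=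
  [/\ 1 < n, idempotent_op f &
      forall (x y : V) (i j : 'I_n), f (nu_tuple x y i) = f (nu_tuple x y j)].

Definition weak_nu_polymorphism (E : rel V) (n : nat) (f : {ffun 'I_n -> V} -> V) :=
  weak_nu_op f /\ dg_polymorphism E f.

Definition weak_nu_polymorphism2 (E : rel V) (P1 P2 : pred V) (n : nat)
    (f : {ffun 'I_n -> V} -> V) :=
  [/\ weak_nu_op f, dg_polymorphism E f, unary_polymorphism P1 f
    & unary_polymorphism P2 f].
End Defs.

Definition loopless (V : finType) (E : rel V) := forall x, ~~ E x x.

Definition in_left (V1 V2 : Type) (u : V1 + V2) : bool :=
  if u is inl _ then true else false.
Definition in_right (V1 V2 : Type) (u : V1 + V2) : bool :=
  if u is inr _ then true else false.

Definition union_rel (V1 V2 : finType) (E1 : rel V1) (E2 : rel V2) : rel (V1 + V2) :=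
  fun u v => match u, v with
             | inl a, inl b => E1 a b
             | inr a, inr b => E2 a b
             | _, _ => false
             end.

From Pilot Require Import Defs.
From mathcomp Require Import all_boot.
Set Implicit Arguments. Unset Strict Implicit. Unset Printing Implicit Defensive.

(* A tuple over V1 + V2 either lies entirely in V1, entirely in V2, or is
   mixed.  On the pure tuples w is t1 or t2, so every property of t1 and t2
   transfers.  On a mixed tuple w returns the entry at the least position
   lying in V1; an edge of the disjoint union never leaves a component, so
   edge-related tuples have the same V1-pattern, hence the same least
   V1-position, and w maps them to the ends of an edge.  A weak NU tuple
   with entries in different components is mixed (as n > 1) and w returns
   its unique V1-entry, whatever the position of the odd entry. *)

Lemma exists_least_ord n (P : pred 'I_n) :
  (exists i, P i) -> exists2 i, P i & forall j : 'I_n, j < i -> ~~ P j.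
Proof.
move=> [i0 Pi0]; case: (arg_minnP val Pi0) => i Pi imin.
by exists i => // j; apply: contraTN => /imin; rewrite -leqNgt.
Qed.

Lemma other_ord n (i : 'I_n) : 1 < n -> exists j : 'I_n, j != i.
Proof.
move=> n_gt1; have n_gt0 : 0 < n := ltnW n_gt1.
case: (eqVneq (val i) 0) => [i0|i_neq0].
  by exists (Ordinal n_gt1); rewrite -val_eqE /= i0.
by exists (Ordinal n_gt0); rewrite -val_eqE /= eq_sym.
Qed.

Section SumTuples.
Variables (I : finType) (V1 V2 : Type).

Lemma ffun_inl_of_all (x : {ffun I -> V1 + V2}) :
  (forall i, in_left (x i)) -> exists a : {ffun I -> V1}, x = [ffun i => inl (a i)].
Proof.
move=> xl; have [a xa] : exists a : I -> V1, forall i, x i = inl (a i).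
  apply: (@fin_all_exists I (fun=> V1) (fun i v => x i = inl v)) => i.
  by move: (xl i); case: (x i) => // v _; exists v.
by exists [ffun i => a i]; apply/ffunP => i; rewrite !ffunE.
Qed.

Lemma ffun_inr_of_all (x : {ffun I -> V1 + V2}) :
  (forall i, in_right (x i)) -> exists b : {ffun I -> V2}, x = [ffun i => inr (b i)].
Proof.
move=> xr; have [b xb] : exists b : I -> V2, forall i, x i = inr (b i).
  apply: (@fin_all_exists I (fun=> V2) (fun i v => x i = inr v)) => i.
  by move: (xr i); case: (x i) => // v _; exists v.
by exists [ffun i => b i]; apply/ffunP => i; rewrite !ffunE.
Qed.

Variant sum_tuple_spec (x : {ffun I -> V1 + V2}) : Prop :=
  | SumTupleLeft (a : {ffun I -> V1}) of x = [ffun i => inl (a i)]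
  | SumTupleRight (b : {ffun I -> V2}) of x = [ffun i => inr (b i)]
  | SumTupleMixed (i j : I) of in_left (x i) & in_right (x j).

Lemma sum_tupleP (x : {ffun I -> V1 + V2}) : sum_tuple_spec x.
Proof.
have [/forallP xl|/forallPn [j xj]] := boolP [forall i, in_left (x i)].
  by have [a ->] := ffun_inl_of_all xl; exact: SumTupleLeft.
have [/forallP xr|/forallPn [i xi]] := boolP [forall i, in_right (x i)].
  by have [b ->] := ffun_inr_of_all xr; exact: SumTupleRight.
by apply: (SumTupleMixed (i := i) (j := j)); move: xi xj; case: (x i); case: (x j).
Qed.

End SumTuples.

Lemma nu_tuple_map (V V' : finType) n (f : V -> V') (x y : V) (i : 'I_n) :
  nu_tuple (f x) (f y) i = [ffun k => f (nu_tuple x y i k)].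
Proof. by apply/ffunP => k; rewrite !ffunE; case: eqP. Qed.

Lemma const_ffun_map (I : finType) (V V' : Type) (f : V -> V') (v : V) :
  [ffun _ : I => f v] = [ffun k => f ([ffun _ : I => v] k)].
Proof. by apply/ffunP => k; rewrite !ffunE. Qed.

Lemma union_rel_in_left (V1 V2 : finType) (E1 : rel V1) (E2 : rel V2) u v :
  union_rel E1 E2 u v -> in_left u = in_left v.
Proof. by case: u; case: v. Qed.

Section Gluing.
Variables (V1 V2 : finType) (n : nat).
Variables (t1 : {ffun 'I_n -> V1} -> V1) (t2 : {ffun 'I_n -> V2} -> V2).
Variable w : {ffun 'I_n -> V1 + V2} -> V1 + V2.
Hypothesis w_inl : forall a : {ffun 'I_n -> V1}, w [ffun i => inl (a i)] = inl (t1 a).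
Hypothesis w_inr : forall b : {ffun 'I_n -> V2}, w [ffun i => inr (b i)] = inr (t2 b).
Hypothesis w_mixed : forall x : {ffun 'I_n -> V1 + V2},
  ~ (forall i, in_left (x i)) -> ~ (forall i, in_right (x i)) ->
  forall i, in_left (x i) -> (forall j : 'I_n, j < i -> ~~ in_left (x j)) ->
  w x = x i.

Lemma w_least_left (x : {ffun 'I_n -> V1 + V2}) (i j : 'I_n) :
  in_right (x j) -> in_left (x i) ->
  (forall k : 'I_n, k < i -> ~~ in_left (x k)) -> w x = x i.
Proof.
move=> xj xi imin; apply: (w_mixed _ _ xi imin).
  by move=> /(_ j); case: (x j) xj.
by move=> /(_ i); case: (x i) xi.
Qed.

Lemma w_mixed_const (x : {ffun 'I_n -> V1 + V2}) (i j : 'I_n) (c : V1 + V2) :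
  in_left (x i) -> in_right (x j) ->
  (forall k, in_left (x k) -> x k = c) -> w x = c.
Proof.
move=> xi xj xc.
have [k xk kmin] := @exists_least_ord _ (fun k => in_left (x k)) (ex_intro _ i xi).
by rewrite (w_least_left xj xk kmin) xc.
Qed.

Lemma idempotent_glue :
  Defs.idempotent_op t1 -> Defs.idempotent_op t2 -> Defs.idempotent_op w.
Proof.
move=> id1 id2 [v|v].
  by rewrite (const_ffun_map _ (@inl V1 V2)) w_inl id1.
by rewrite (const_ffun_map _ (@inr V1 V2)) w_inr id2.
Qed.

Lemma w_nu_tuple_split (x y : V1 + V2) (i : 'I_n) :
  1 < n -> in_left x != in_left y ->
  w (nu_tuple x y i) = if in_left x then x else y.
Proof.
move=> n_gt1 xy; have [j ji] := other_ord i n_gt1.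
have yi : nu_tuple x y i i = y by rewrite ffunE eqxx.
have xj : nu_tuple x y i j = x by rewrite ffunE (negbTE ji).
case: x y xy yi xj => x [] y //= _ yi xj.
- by apply: (w_mixed_const (i := j) (j := i)); rewrite ?xj ?yi //;
    move=> k; rewrite ffunE; case: eqP.
- by apply: (w_mixed_const (i := i) (j := j)); rewrite ?xj ?yi //;
    move=> k; rewrite ffunE; case: eqP.
Qed.

Lemma weak_nu_glue : weak_nu_op t1 -> weak_nu_op t2 -> weak_nu_op w.
Proof.
move=> [n_gt1 id1 nu1] [_ id2 nu2]; split=> //; first exact: idempotent_glue.
move=> [x|x] [y|y] i j.
- by rewrite !nu_tuple_map !w_inl (nu1 x y i j).
- by rewrite !w_nu_tuple_split.
- by rewrite !w_nu_tuple_split.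
- by rewrite !nu_tuple_map !w_inr (nu2 x y i j).
Qed.

Lemma dg_polymorphism_glue (E1 : rel V1) (E2 : rel V2) :
  dg_polymorphism E1 t1 -> dg_polymorphism E2 t2 ->
  dg_polymorphism (union_rel E1 E2) w.
Proof.
move=> pol1 pol2 a b ab.
have ab_left i : in_left (a i) = in_left (b i) := union_rel_in_left (ab i).
case: (sum_tupleP a) => [a' ea|a' ea|i j ai aj].
- have [b' eb] : exists b' : {ffun 'I_n -> V1}, b = [ffun i => inl (b' i)].
    by apply: ffun_inl_of_all => i; rewrite -ab_left ea ffunE.
  rewrite ea eb !w_inl; apply: pol1 => i.
  by move: (ab i); rewrite ea eb !ffunE.
- have [b' eb] : exists b' : {ffun 'I_n -> V2}, b = [ffun i => inr (b' i)].
    apply: ffun_inr_of_all => i; move: (ab_left i); rewrite ea ffunE.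
    by case: (b i).
  rewrite ea eb !w_inr; apply: pol2 => i.
  by move: (ab i); rewrite ea eb !ffunE.
- have [k ak kmin] := @exists_least_ord _ (fun k => in_left (a k)) (ex_intro _ i ai).
  have bj : in_right (b j) by move: (ab_left j) aj; case: (a j); case: (b j).
  rewrite (w_least_left aj ak kmin) (w_least_left (i := k) bj) ?ab //.
    by rewrite -ab_left.
  by move=> l /kmin; rewrite ab_left.
Qed.

Lemma in_left_glue : unary_polymorphism (@in_left V1 V2) w.
Proof. by move=> x /ffun_inl_of_all [a ->]; rewrite w_inl. Qed.

Lemma in_right_glue : unary_polymorphism (@in_right V1 V2) w.
Proof. by move=> x /ffun_inr_of_all [b ->]; rewrite w_inr. Qed.

End Gluing.

Theorem lemma4p1 (V1 V2 : finType) (E1 : rel V1) (E2 : rel V2) (n : nat)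
  (hG : loopless E1) (hH : loopless E2)
  (t1 : {ffun 'I_n -> V1} -> V1) (t2 : {ffun 'I_n -> V2} -> V2)
  (ht1 : weak_nu_polymorphism E1 t1) (ht2 : weak_nu_polymorphism E2 t2)
  (w : {ffun 'I_n -> V1 + V2} -> V1 + V2)
  (hw1 : forall a : {ffun 'I_n -> V1}, w [ffun i => inl (a i)] = inl (t1 a))
  (hw2 : forall b : {ffun 'I_n -> V2}, w [ffun i => inr (b i)] = inr (t2 b))
  (hw3 : forall x : {ffun 'I_n -> V1 + V2},
      ~ (forall i : 'I_n, @in_left V1 V2 (x i)) -> ~ (forall i : 'I_n, @in_right V1 V2 (x i)) ->
      forall i : 'I_n, @in_left V1 V2 (x i) ->
      (forall j : 'I_n, (j < i)%N -> ~~ @in_left V1 V2 (x j)) ->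
      w x = x i) :
  weak_nu_polymorphism (union_rel E1 E2) w /\
  weak_nu_polymorphism2 (union_rel E1 E2) (@in_left V1 V2) (@in_right V1 V2) w.
Proof.
case: ht1 => [nu1 pol1]; case: ht2 => [nu2 pol2].
have nu : weak_nu_op w := weak_nu_glue hw1 hw2 hw3 nu1 nu2.
have pol : dg_polymorphism (union_rel E1 E2) w :=
  dg_polymorphism_glue hw1 hw2 hw3 pol1 pol2.
split; split=> //; [exact: in_left_glue hw1 | exact: in_right_glue hw2].
Qed.
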